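(* Let $F_{\mathcal P}$ be a function determined by Algorithm 1 for a path $\mathcal P$. Then for every configuration $\vec i$ on $\mathrm{Conn}(\mathcal P)$ and every plaquette $p\in\mathcal B_{\mathcal P}$, $F_{\mathcal P}(\vec i\oplus\vec\alpha^p)=\frac{b_p(\vec i\oplus\vec\alpha^{\mathcal P})}{b_p(\vec i)}F_{\mathcal P}(\vec i)$; equivalently $S^+_{\mathcal P}=X_{\mathcal P}\sum_{\vec i}F_{\mathcal P}(\vec i)|\vec i\rangle\langle\vec i|$ commutes with every $B_p$.
   Context: Let $\Lambda$ be a hexagonal (honeycomb) lattice embedded in a closed orientable surface, with one qubit on each edge. For an edge $j$, $\sigma^x_j,\sigma^z_j$ denote the Pauli operators on qubit $j$ and $n^{\pm}_j=\tfrac12(1\pm\sigma^z_j)$. A (string) configuration $\vec i$ is a computational basis state, viewed as a bit string assigning $0$ (empty) or $1$ (occupied) to each edge; $\vec i\oplus\vec\alpha$ is bitwise addition mod 2. For a hexagonal plaquette $p$, label its boundary edges $1,\dots,6$ cyclically (index $0$ means $6$) and its outgoing edges so that edge $12$ meets edges $6,1$; edge $7$ meets $1,2$; edge $8$ meets $2,3$; edge $9$ meets $3,4$; edge $10$ meets $4,5$; edge $11$ meets $5,6$. Define $B_p=\Big(\prod_{j=1}^6\sigma^x_j\Big)\Big(\prod_{j=1}^6(-1)^{n^-_{j-1}n^+_j}\Big)\,i^{n^-_{12}(n^-_1n^-_6-n^+_1n^+_6)}\,i^{n^-_7(n^+_1n^+_2-n^-_1n^-_2)}\,i^{n^+_8(n^-_2n^+_3-n^+_2n^-_3)}\,i^{n^-_9(n^-_3n^-_4-n^+_3n^+_4)}\,i^{n^-_{10}(n^+_4n^+_5-n^-_4n^-_5)}\,i^{n^+_{11}(n^-_5n^+_6-n^+_5n^-_6)}$;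 all $B_p$ commute pairwise and square to the identity. Write $B_p=\prod_{j\in\partial p}\sigma^x_j\sum_{\vec i}b_p(\vec i)|\vec i\rangle\langle\vec i|$, defining the phase $b_p(\vec i)$. Let $\vec\alpha^p$ be the configuration occupied exactly on the boundary edges of $p$. A path $\mathcal P$ is a sequence of edges forming a walk; $\vec\alpha^{\mathcal P}$ is the mod-2 sum of the indicators of its edges and $X_{\mathcal P}$ the product of $\sigma^x$ over its edges. $\mathrm{Conn}(\mathcal P)$ is the set of edges of $\mathcal P$ together with all edges sharing a vertex with an edge of $\mathcal P$; $\mathcal B_{\mathcal P}$ is the set of plaquettes with at least one boundary edge in $\mathrm{Conn}(\mathcal P)$. Define $\theta_{\mathcal P}(\vec i,p_1,\dots,p_m)=\prod_{k=1}^m \frac{b_{p_k}(\vec i\oplus\vec\alpha^{\mathcal P}\oplus\bigoplus_{j<k}\vec\alpha^{p_j})}{b_{p_k}(\vec i\oplus\bigoplus_{j<k}\vec\alpha^{p_j})}$ (a configuration on $\mathrm{Conn}(\mathcal P)$ being extended arbitrarily to the whole lattice). The configuration class of $\vec i$ on $\mathrm{Conn}(\mathcal P)$ is $\mathcal C_{\mathcal P}(\vec i)=\{\vec i\oplus\bigoplus_{p\in S}\vec\alpha^p|_{\mathrm{Conn}(\mathcal P)}:S\subseteq\mathcal B_{\mathcal P}\}$. Algorithm 1: for each configuration class pick a representative $\vec i$, set $F_{\mathcal P}(\vec i)$ to an arbitrary unit complex number, and for every subset $\{p_1,\dots,p_m\}\subseteq\mathcal B_{\mathcal P}$ set $F_{\mathcal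 P}(\vec i\oplus\bigoplus_k\vec\alpha^{p_k})=\theta_{\mathcal P}(\vec i,p_1,\dots,p_m)F_{\mathcal P}(\vec i)$. *)

From HB Require Import structures.
From mathcomp Require Import all_boot all_order all_algebra.
Unset Printing Implicit Defensive.
Import Order.TTheory GRing.Theory Num.Theory.
Local Open Scope ring_scope.

(* A hexagonal lattice on a closed orientable surface is necessarily a torus
   (Euler characteristic 0), i.e. the plane honeycomb modulo a full-rank
   lattice of translations.  Hexagon (plaquette) centres are points of the
   triangular lattice Z^2 (axial coordinates, unit steps dir 0..5 below);
   the translation lattice is given in Hermite form by the basis
   (La+1, 0), (Lb, Lc+1).  lrot/lflip fix the (translation-invariant)
   convention of which boundary edge of a plaquette is labelled 1 and
   in which cyclic sense the labels 1..6 run; the theorem is stated for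
   every such convention. *)
Record hexlat := HexLat { La : nat; Lb : nat; Lc : nat; lrot : nat; lflip : bool }.

Definition coord := (int * int)%type.
Definition addc (u v : coord) : coord := (u.1 + v.1, u.2 + v.2).

Definition hexnorm (v : coord) : nat :=
  ((absz v.1 + absz v.2 + absz (v.1 + v.2)%R) %/ 2)%N.

(* the six unit steps, in counterclockwise order *)
Definition dir (k : nat) : coord :=
  nth (0, 0) [:: (1, 0); (0, 1); (-1, 1); (-1, 0); (0, -1); (1, -1)] (k %% 6).

Notation hex L := ('I_(La L).+1 * 'I_(Lc L).+1)%type.

Definition hexof (L : hexlat) (X : coord) : hex L :=
  let q := (X.2 %/ (Lc L).+1%:Z)%Z in
  let y := (X.2 %% (Lc L).+1%:Z)%Z in
  let x := ((X.1 - q * (Lb L)%:Z) %% (La L).+1%:Z)%Z in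
  (inord (absz x), inord (absz y)).

Definition pos (L : hexlat) (h : hex L) : coord := ((h.1 : nat)%:Z, (h.2 : nat)%:Z).

(* edges: the edge (h,k), k<3, is the edge separating hexagon h from h + dir k *)
Notation edge L := (hex L * 'I_3)%type.

Definition edge_of (L : hexlat) (X : coord) (k : nat) : edge L :=
  let k' := (k %% 6)%N in
  if (k' < 3)%N then (hexof L X, inord k')
  else (hexof L (addc X (dir k')), inord (k' - 3)).

(* vertices: (g,true) is the vertex common to hexagons g, g+dir 0, g+dir 1;
   (g,false) the vertex common to g, g+dir 0, g+dir 5. *)
Notation vert L := (hex L * bool)%type.

(* the corner of hexagon X common to X, X + dir k, X + dir (k+1) *)
Definition corner (L : hexlat) (X : coord) (k : nat) : vert L :=
  match (k %% 6)%N with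
  | 0 => (hexof L X, true)
  | 1 => (hexof L (addc X (dir 2)), false)
  | 2 => (hexof L (addc X (dir 3)), true)
  | 3 => (hexof L (addc X (dir 3)), false)
  | 4 => (hexof L (addc X (dir 4)), true)
  | _ => (hexof L X, false)
  end.

Definition ends (L : hexlat) (e : edge L) : vert L * vert L :=
  (corner L (pos L e.1) e.2, corner L (pos L e.1) (e.2 + 5)).

Definition incident (L : hexlat) (v : vert L) (e : edge L) : bool :=
  (v == (ends L e).1) || (v == (ends L e).2).

Definition shares_vertex (L : hexlat) (e e' : edge L) : bool :=
  [exists v : vert L, incident L v e && incident L v e'].

Fixpoint walk_from (L : hexlat) (v : vert L) (s : seq (edge L)) : bool :=
  match s with
  | [::] => true
  | e :: s' => incident L v e &&
      walk_from L (if v == (ends L e).1 then (ends L e).2 else (ends L e).1) s'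
  end.
Definition is_walk (L : hexlat) (s : seq (edge L)) : bool :=
  [exists v : vert L, walk_from L v s].

(* configurations: true = occupied (|1>), false = empty (|0>) *)
Notation conf L := {ffun edge L -> bool}.

Definition cxor (L : hexlat) (i j : conf L) : conf L := [ffun e => i e (+) j e].
Definition czero (L : hexlat) : conf L := [ffun => false].

Definition alpha_plaq (L : hexlat) (p : hex L) : conf L :=
  [ffun e => [exists k : 'I_6, e == edge_of L (pos L p) k]].
Definition alpha_plaqs (L : hexlat) (ps : seq (hex L)) : conf L :=
  foldr (cxor L) (czero L) [seq alpha_plaq L p | p <- ps].
Definition alpha_path (L : hexlat) (s : seq (edge L)) : conf L :=
  [ffun e => odd (count_mem e s)].

Definition Conn (L : hexlat) (s : seq (edge L)) : {set edge L} :=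
  [set e | [exists e0 : edge L, (e0 \in s) && ((e == e0) || shares_vertex L e0 e)]].
Definition BP (L : hexlat) (s : seq (edge L)) : {set hex L} :=
  [set p | [exists k : 'I_6, edge_of L (pos L p) k \in Conn L s]].

(* restriction of a configuration to a set of edges (zero outside);
   configurations on A are those with restr A i = i *)
Definition restr (L : hexlat) (A : {set edge L}) (i : conf L) : conf L :=
  [ffun e => (e \in A) && i e].

Definition cls (L : hexlat) (s : seq (edge L)) (i : conf L) : {set conf L} :=
  [set restr L (Conn L s) (cxor L i (alpha_plaqs L (enum S))) | S : {set hex L} in powerset (BP L s)].

(* labelling of the 12 edges of plaquette p (labels 1..6 boundary, 0 = 6,
   7..12 outgoing, as in the paper) *)
Definition lsgn (L : hexlat) : nat := if lflip L then 5%N else 1%N.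
Definition delta (L : hexlat) (j : nat) : nat := (lrot L + lsgn L * j)%N.
Definition nbr (L : hexlat) (p : hex L) (j : nat) : coord := addc (pos L p) (dir (delta L j)).
Definition lab (L : hexlat) (p : hex L) (j : nat) : edge L :=
  if (j <= 6)%N then edge_of L (pos L p) (delta L j)
  else edge_of L (nbr L p (j - 6)) (delta L (j - 6) + 2 * lsgn L).

(* n^-_e = 1 iff occupied, n^+_e = 1 iff empty *)
Definition nm (L : hexlat) (i : conf L) (e : edge L) : int := (i e : nat)%:Z.
Definition np (L : hexlat) (i : conf L) (e : edge L) : int := 1 - nm L i e.

Definition bph (L : hexlat) (C : numClosedFieldType) (p : hex L) (i : conf L) : C :=
  let n_ j := nm L i (lab L p j) in
  let p_ j := np L i (lab L p j) in
  (\prod_(j < 6) (-1) ^ (n_ j * p_ j.+1)) *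
  'i ^ (n_ 12%N * (n_ 1%N * n_ 6%N - p_ 1%N * p_ 6%N)) *
  'i ^ (n_ 7%N * (p_ 1%N * p_ 2%N - n_ 1%N * n_ 2%N)) *
  'i ^ (p_ 8%N * (n_ 2%N * p_ 3%N - p_ 2%N * n_ 3%N)) *
  'i ^ (n_ 9%N * (n_ 3%N * n_ 4%N - p_ 3%N * p_ 4%N)) *
  'i ^ (n_ 10%N * (p_ 4%N * p_ 5%N - n_ 4%N * n_ 5%N)) *
  'i ^ (p_ 11%N * (n_ 5%N * p_ 6%N - p_ 5%N * n_ 6%N)).

Definition theta (L : hexlat) (C : numClosedFieldType) (s : seq (edge L))
    (i : conf L) (ps : seq (hex L)) : C :=
  \prod_(k < size ps)
    (bph L C (nth (ord0, ord0) ps k)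
        (cxor L (cxor L i (alpha_path L s)) (alpha_plaqs L (take k ps))) /
     bph L C (nth (ord0, ord0) ps k) (cxor L i (alpha_plaqs L (take k ps)))).

(* Write beta_p(x) := b_p(x + alpha^P) / b_p(x).
   (1) Locality: b_p is a product of twelve vertex factors, each depending on
       the occupations of three edges meeting at one vertex of p.  If one of
       them lies on P, all three lie in Conn(P); otherwise alpha^P does not
       touch them.  Hence beta_p(x) only depends on x restricted to Conn(P).
   (2) Involution: B_p^2 = 1, i.e. b_p(z) b_p(z + alpha^p) = 1.  This needs
       that the outgoing edges 7..12 of p are not boundary edges of p, which
       holds because the translation lattice of the torus has hexagonal
       length at least 3.  Consequently beta_p(x + alpha^p) beta_p(x) = 1.
   (3) Given i, let r be the representative of its class, i = r + alpha^S on
       Conn(P).  If p is not in S, Algorithm 1 applied to S and to S + {p}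
       gives the claim, the extra factor of theta being beta_p of a
       configuration that agrees with i on Conn(P).  If p is in S, apply the
       previous case to i + alpha^p and invert using (2). *)
From Pilot Require Import Defs.
From HB Require Import structures.
From mathcomp Require Import all_boot all_order all_algebra.
From mathcomp Require Import ring zify.
Import Order.TTheory GRing.Theory Num.Theory.
Local Open Scope ring_scope.

Definition subc (u v : Defs.coord) : Defs.coord := (u.1 - v.1, u.2 - v.2).

(* Every nonzero translation of the torus has hexagonal length at least 3,
   so that a plaquette and its neighbours do not wrap around the torus. *)
Definition large_torus (L : hexlat) : Prop :=
  forall m n : int, (m, n) != (0, 0) ->
    leq 3 (hexnorm (m * (La L).+1%:Z + n * (Lb L)%:Z, n * (Lc L).+1%:Z)).

Lemma addc0 X : addc X (0, 0) = X.
Proof. by case: X => x y; rewrite /addc /= !addr0. Qed.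

Lemma addcA X u v : addc (addc X u) v = addc X (addc u v).
Proof. by rewrite /addc /= !addrA. Qed.

Lemma dir_eqmod k k' : (k %% 6 = k' %% 6)%N -> dir k = dir k'.
Proof. by rewrite /dir => ->. Qed.

Section Torus.
Variable L : hexlat.
Let a : int := (La L).+1%:Z.
Let b : int := (Lb L)%:Z.
Let c : int := (Lc L).+1%:Z.

Lemma hexof_decomp X : exists k q : int,
  X = addc (pos L (hexof L X)) (k * a + q * b, q * c).
Proof.
rewrite /hexof /pos /=.
set q := (X.2 %/ c)%Z.
set x := ((X.1 - q * b) %% a)%Z.
set y := (X.2 %% c)%Z.
have x0 : 0 <= x by apply: modz_ge0.
have xa : x < a by apply: ltz_pmod.
have y0 : 0 <= y by apply: modz_ge0.
have yc : y < c by apply: ltz_pmod.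
have -> : ((inord `|x|%N : 'I_(La L).+1) : nat)%:Z = x.
  by rewrite inordK ?gez0_abs // -ltz_nat gez0_abs.
have -> : ((inord `|y|%N : 'I_(Lc L).+1) : nat)%:Z = y.
  by rewrite inordK ?gez0_abs // -ltz_nat gez0_abs.
exists ((X.1 - q * b) %/ a)%Z, q.
have H1 := divz_eq (X.1 - q * b) a.
have H2 := divz_eq X.2 c.
rewrite -/x in H1; rewrite -/q -/y in H2.
set k := ((X.1 - q * b) %/ a)%Z in H1 *.
clearbody x y k q.
rewrite /addc; apply: injective_projections => /=.
  by rewrite -(subrK (q * b) X.1) H1; ring.
by rewrite {1}H2; ring.
Qed.

Lemma hexof_shift X m n :
  hexof L (addc X (m * a + n * b, n * c)) = hexof L X.
Proof.
rewrite /hexof /addc /=.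
have -> : ((X.2 + n * c) %/ c)%Z = n + (X.2 %/ c)%Z by rewrite addrC divzMDl.
have -> : ((X.2 + n * c) %% c)%Z = (X.2 %% c)%Z by rewrite addrC modzMDl.
congr (inord `|_|, _).
have -> : X.1 + (m * a + n * b) - (n + (X.2 %/ c)%Z) * b
   = m * a + (X.1 - (X.2 %/ c)%Z * b) by ring.
by rewrite modzMDl.
Qed.

Lemma hexof_pos X v : hexof L (addc (pos L (hexof L X)) v) = hexof L (addc X v).
Proof.
have [k [q E]] := hexof_decomp X.
rewrite [in RHS]E addcA.
have -> : addc (k * a + q * b, q * c) v = addc v (k * a + q * b, q * c).
  by rewrite /addc /= [_ + v.1]addrC [_ + v.2]addrC.
by rewrite -addcA hexof_shift.
Qed.

Lemma hexof_eq X Y : hexof L X = hexof L Y ->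
  exists m n : int, subc X Y = (m * a + n * b, n * c).
Proof.
have [k1 [q1 E1]] := hexof_decomp X.
have [k2 [q2 E2]] := hexof_decomp Y.
move=> H; rewrite E1 E2 H.
exists (k1 - k2), (q1 - q2).
by rewrite /subc /addc /=; congr (_, _); ring.
Qed.

Lemma corner_eqmod X k k' : (k %% 6 = k' %% 6)%N -> corner L X k = corner L X k'.
Proof. by rewrite /corner => ->. Qed.

Lemma corner_shift1 X k : corner L X k = corner L (addc X (dir k)) (k + 2).
Proof.
rewrite (corner_eqmod _ (k + 2) (k %% 6 + 2)); last by rewrite modnDml.
rewrite (dir_eqmod k (k %% 6)) ?modn_mod // (corner_eqmod X k (k %% 6)) ?modn_mod //.
have : (k %% 6 < 6)%N by rewrite ltn_mod.
move: (k %% 6)%N => t.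
by case: t => [|[|[|[|[|[|t]]]]]] // _; rewrite /corner /dir /= ?addcA /= ?addc0.
Qed.

Lemma corner_shift2 X k : corner L X k = corner L (addc X (dir (k + 1))) (k + 4).
Proof.
rewrite (corner_eqmod _ (k + 4) (k %% 6 + 4)); last by rewrite modnDml.
rewrite (dir_eqmod (k + 1) (k %% 6 + 1)); last by rewrite modnDml.
rewrite (corner_eqmod X k (k %% 6)) ?modn_mod //.
have : (k %% 6 < 6)%N by rewrite ltn_mod.
move: (k %% 6)%N => t.
by case: t => [|[|[|[|[|[|t]]]]]] // _; rewrite /corner /dir /= ?addcA /= ?addc0.
Qed.

Lemma corner_pos X k : corner L (pos L (hexof L X)) k = corner L X k.
Proof.
rewrite /corner; case: (k %% 6)%N => [|[|[|[|[|?]]]]]; rewrite ?hexof_pos //.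
all: by rewrite -[pos L _]addc0 hexof_pos addc0.
Qed.

Lemma incident_edge_of v X k : incident L v (edge_of L X k) =
  (v == corner L X k) || (v == corner L X (k + 5)).
Proof.
rewrite /incident /ends /edge_of.
have kt : (k %% 6 < 6)%N by rewrite ltn_mod.
case: ifP => H /=.
  rewrite !corner_pos inordK //.
  rewrite (corner_eqmod X (k %% 6) k) ?modn_mod //.
  by rewrite (corner_eqmod X (k %% 6 + 5) (k + 5)) // modnDml.
rewrite !corner_pos inordK; last by lia.
rewrite (corner_eqmod _ (k %% 6 - 3 + 5) (k %% 6 + 2)); last by congr (_ %% _)%N; lia.
rewrite -corner_shift1 (corner_eqmod X (k %% 6) k) ?modn_mod // orbC.
rewrite (corner_shift2 X (k + 5)) (dir_eqmod (k + 5 + 1) (k %% 6)); last by lia.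
by rewrite (corner_eqmod _ (k + 5 + 4) (k %% 6 - 3)) //; lia.
Qed.

Lemma term_vertex X d :
  let v := corner L X (d + (if lflip L then 5 else 0)) in
  [&& incident L v (edge_of L X d), incident L v (edge_of L X (d + lsgn L))
    & incident L v (edge_of L (addc X (dir d)) (d + 2 * lsgn L))].
Proof.
rewrite /lsgn; case: (lflip L) => /=; rewrite !incident_edge_of.
  rewrite eqxx orbT /=.
  rewrite (corner_shift2 X (d + 5)) (dir_eqmod (d + 5 + 1) d); last by lia.
  rewrite (corner_eqmod _ (d + 5 + 4) (d + 2 * 5 + 5)); last by lia.
  by rewrite eqxx orbT.
rewrite addn0 eqxx /=.
rewrite (corner_eqmod X (d + 1 + 5) d); last by lia.
by rewrite eqxx orbT (corner_shift1 X d) muln1 eqxx.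
Qed.
End Torus.

Definition ebase (k : nat) : Defs.coord :=
  if (k %% 6 < 3)%N then (0, 0) else dir (k %% 6).
Definition eidx (k : nat) : nat := if (k %% 6 < 3)%N then (k %% 6)%N else (k %% 6 - 3)%N.

Lemma edge_of_form L X k : edge_of L X k = (hexof L (addc X (ebase k)), inord (eidx k)).
Proof. by rewrite /edge_of /ebase /eidx; case: ifP; rewrite ?addc0. Qed.

Lemma edge_of_eqmod L X k k' : (k %% 6 = k' %% 6)%N -> edge_of L X k = edge_of L X k'.
Proof. by rewrite /edge_of => ->. Qed.
Lemma ebase_eqmod k k' : (k %% 6 = k' %% 6)%N -> ebase k = ebase k'.
Proof. by rewrite /ebase => ->. Qed.
Lemma eidx_eqmod k k' : (k %% 6 = k' %% 6)%N -> eidx k = eidx k'.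
Proof. by rewrite /eidx => ->. Qed.
Lemma eidx_lt k : (eidx k < 3)%N.
Proof. rewrite /eidx; case: ifP => //; have := ltn_mod k 6; lia. Qed.

Definition outer_apart (t : nat) (fl : bool) (k : nat) : bool :=
  let s := if fl then 5%N else 1%N in
  let w1 := addc (dir t) (ebase (t + 2 * s)) in
  let w2 := ebase k in
  (eidx (t + 2 * s) != eidx k) || ((w1 != w2) && (hexnorm (subc w1 w2) < 3)%N).

Lemma outer_apart_all :
  all (fun t => all (fun k => outer_apart t true k && outer_apart t false k) (iota 0 6))
    (iota 0 6).
Proof. by vm_compute. Qed.

Lemma outer_not_boundary (L : hexlat) (Hlat : large_torus L)
  X d k : edge_of L (addc X (dir d)) (d + 2 * lsgn L) != edge_of L X k.
Proof.
set t := (d %% 6)%N; set k' := (k %% 6)%N.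
have Hck : outer_apart t (lflip L) k'.
  have ti : t \in iota 0 6 by rewrite mem_iota ltn_mod.
  have ki : k' \in iota 0 6 by rewrite mem_iota ltn_mod.
  have /andP [] := allP (allP outer_apart_all t ti) k' ki.
  by case: (lflip L).
rewrite !edge_of_form addcA (dir_eqmod d t) ?modn_mod //.
rewrite (ebase_eqmod (d + 2 * lsgn L) (t + 2 * lsgn L)); last by rewrite modnDml.
rewrite (eidx_eqmod (d + 2 * lsgn L) (t + 2 * lsgn L)); last by rewrite modnDml.
rewrite (ebase_eqmod k k') ?modn_mod // (eidx_eqmod k k') ?modn_mod //.
move: Hck; rewrite /outer_apart -[if lflip L then _ else _]/(lsgn L).
set w1 := addc _ _; set w2 := ebase k'.
have l1 := eidx_lt (t + 2 * lsgn L); have l2 := eidx_lt k'.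
move=> Hapart; apply/negP => /eqP Eedge.
case/orP: Hapart => [Hi | /andP [Hw Hn]].
  have Ei : (inord (eidx (t + 2 * lsgn L)) : 'I_3) = inord (eidx k') := f_equal snd Eedge.
  by move: Hi; rewrite -(inordK l1) -(inordK l2) Ei eqxx.
have Eh : hexof L (addc X w1) = hexof L (addc X w2) := f_equal fst Eedge.
have [m [n E]] := @hexof_eq L _ _ Eh.
have Ew : subc (addc X w1) (addc X w2) = subc w1 w2.
  by rewrite /subc /addc /=; congr (_, _); ring.
rewrite Ew {Ew Eh Eedge} in E.
case: (eqVneq (m, n) (0, 0)) => [[Em En] | Hmn]; last first.
  by move: (Hlat m n Hmn); rewrite -E; lia.
move: E Hw; rewrite Em En !mul0r addr0 /subc; clear Hn; clearbody w1 w2.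
case: w1 => ? ?; case: w2 => ? ? /= [/eqP + /eqP].
by rewrite !subr_eq0 => /eqP -> /eqP ->; rewrite eqxx.
Qed.

Definition meet_at_vertex L (e1 e2 e3 : edge L) : Prop :=
  exists v, [&& incident L v e1, incident L v e2 & incident L v e3].

(* The twelve vertex triples of labels of a plaquette: for k < 6 the vertex
   between boundary edges k and k + 1; for k = 6..11 the vertex where the
   outgoing edge 12, 7, ..., 11 meets the boundary. *)
Definition vtriple (k : nat) : nat * nat * nat :=
  nth (0, 0, 0)%N [:: (0, 1, 1); (1, 2, 2); (2, 3, 3); (3, 4, 4); (4, 5, 5); (5, 6, 6);
                     (12, 1, 6); (7, 1, 2); (8, 2, 3); (9, 3, 4); (10, 4, 5); (11, 5, 6)]%N k.

Section Labels.
Variables (L : hexlat) (p : hex L).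

Lemma deltaS j : delta L j.+1 = (delta L j + lsgn L)%N.
Proof. by rewrite /delta mulnS; lia. Qed.

Lemma lab_boundary k : (k <= 6)%N -> lab L p k = edge_of L (pos L p) (delta L k).
Proof. by rewrite /lab => ->. Qed.

Lemma lab0 : lab L p 0 = lab L p 6.
Proof.
rewrite !lab_boundary //; apply: edge_of_eqmod.
by rewrite /delta /lsgn; case: (lflip L); lia.
Qed.

Lemma lab1 : lab L p 1 = edge_of L (pos L p) (delta L 6 + lsgn L).
Proof.
rewrite lab_boundary //; apply: edge_of_eqmod.
by rewrite /delta /lsgn; case: (lflip L); lia.
Qed.

Lemma lab_vertex j : (0 < j <= 6)%N ->
  let v := corner L (pos L p) (delta L j + (if lflip L then 5 else 0)) in
  [&& incident L v (lab L p j), incident L v (edge_of L (pos L p) (delta L j + lsgn L))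
    & incident L v (lab L p (6 + j))].
Proof.
move=> /andP [j0 j6] /=.
have := term_vertex L (pos L p) (delta L j).
rewrite /lab j6 (_ : (6 + j <= 6)%N = false); last by lia.
by rewrite (_ : (6 + j - 6 = j)%N) //; lia.
Qed.

Lemma vtriple_meet k : (k < 12)%N ->
  meet_at_vertex L (lab L p (vtriple k).1.1) (lab L p (vtriple k).1.2) (lab L p (vtriple k).2).
Proof.
have next j : (j < 6)%N -> lab L p j.+1 = edge_of L (pos L p) (delta L j + lsgn L).
  by move=> jl; rewrite lab_boundary ?deltaS.
case: k => [|[|[|[|[|[|[|[|[|[|[|[|//]]]]]]]]]]]] _ /=.
- have /and3P [A B _] := lab_vertex 6 isT.
  by eexists; apply/and3P; rewrite lab0 lab1; split; [exact: A | exact: B | exact: B].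
1-5: match goal with |- meet_at_vertex _ (lab _ _ ?j) _ _ =>
       have /and3P [A B _] := lab_vertex j isT; rewrite (next j) // end;
     by eexists; apply/and3P; split; [exact: A | exact: B | exact: B].
- have /and3P [A B D] := lab_vertex 6 isT.
  by eexists; apply/and3P; rewrite lab1; split; [exact: D | exact: B | exact: A].
all: match goal with |- meet_at_vertex _ _ (lab _ _ ?j) _ =>
       have /and3P [A B D] := lab_vertex j isT; rewrite (next j) // end;
     by eexists; apply/and3P; split; [exact: D | exact: A | exact: B].
Qed.
End Labels.

Section Phase.
Variable C : numClosedFieldType.

Definition Bform (n : nat -> int) : C :=
  let n_ j := n j in
  let p_ j := 1 - n j in
  (\prod_(j < 6) (-1) ^ (n_ j * p_ j.+1)) *
  'i ^ (n_ 12%N * (n_ 1%N * n_ 6%N - p_ 1%N * p_ 6%N)) *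
  'i ^ (n_ 7%N * (p_ 1%N * p_ 2%N - n_ 1%N * n_ 2%N)) *
  'i ^ (p_ 8%N * (n_ 2%N * p_ 3%N - p_ 2%N * n_ 3%N)) *
  'i ^ (n_ 9%N * (n_ 3%N * n_ 4%N - p_ 3%N * p_ 4%N)) *
  'i ^ (n_ 10%N * (p_ 4%N * p_ 5%N - n_ 4%N * n_ 5%N)) *
  'i ^ (p_ 11%N * (n_ 5%N * p_ 6%N - p_ 5%N * n_ 6%N)).

Lemma Bform_neq0 n : Bform n != 0.
Proof.
have i0 : ('i : C) != 0 by rewrite neq0Ci.
have m0 : (-1 : C) != 0 by rewrite oppr_eq0 oner_eq0.
rewrite /Bform !big_ord_recr !big_ord0 /= !mul1r.
by rewrite !mulf_neq0 // expfz_neq0.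
Qed.

(* B_p^2 = 1: flipping the boundary labels 0..6 (keeping 7..12) inverts the
   phase, since the exponents of 'i add up to a multiple of 4. *)
Lemma Bform_flip (n n' : nat -> int) :
  (forall j, (j <= 6)%N -> n' j = 1 - n j) -> (forall j, (7 <= j)%N -> n' j = n j) ->
  n 0%N = n 6%N -> Bform n * Bform n' = 1.
Proof.
move=> Hin Hout H06.
have i0 : ('i : C) != 0 by rewrite neq0Ci.
have m1 : (-1 : C) = 'i ^ (2%:Z) by rewrite -sqrCi.
have i4 : ('i : C) ^ (4%:Z) = 1.
  by change ('i ^+ (2 * 2) = 1 :> C); rewrite exprM sqrCi expr2 mulrN1 opprK.
rewrite /Bform !big_ord_recr !big_ord0 /= !mul1r m1 !exprz_exp -!expfzDr //.
rewrite (Hin 0%N) // (Hin 1%N) // (Hin 2%N) // (Hin 3%N) // (Hin 4%N) // (Hin 5%N) //.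
rewrite (Hin 6%N) // (Hout 7%N) // (Hout 8%N) // (Hout 9%N) // (Hout 10%N) //.
rewrite (Hout 11%N) // (Hout 12%N) // H06.
set K := (n 1%N + n 2%N + n 3%N + n 4%N + n 5%N + n 6%N
  - (n 6%N * n 1%N + n 1%N * n 2%N + n 2%N * n 3%N + n 3%N * n 4%N
     + n 4%N * n 5%N + n 5%N * n 6%N)).
match goal with |- _ ^ ?E = _ => have -> : E = 4%:Z * K by rewrite /K; ring end.
by rewrite -exprz_exp i4 exp1rz.
Qed.

Definition vfactor (k : nat) (a b c : int) : C :=
  if (k < 6)%N then (-1) ^ (a * (1 - b))
  else match (k %% 3)%N with
       | 0 => 'i ^ (a * (b * c - (1 - b) * (1 - c)))
       | 1 => 'i ^ (a * ((1 - b) * (1 - c) - b * c))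
       | _ => 'i ^ ((1 - a) * (b * (1 - c) - (1 - b) * c))
       end.

Lemma Bform_vertex_factors n : Bform n =
  \prod_(k < 12) vfactor k (n (vtriple k).1.1) (n (vtriple k).1.2) (n (vtriple k).2).
Proof. by rewrite /Bform !big_ord_recr !big_ord0 /= !mul1r. Qed.

(* Comparison of b_p on four occupation functions: u, u' (before and after
   adding alpha^P to a configuration x) and w, w' (the same for y).  G is
   balanced when G u' / G u = G w' / G w. *)
Variables u u' w w' : nat -> int.

Definition balanced (G : (nat -> int) -> C) : Prop := G u' * G w = G w' * G u.

Lemma balanced_prod (G : nat -> (nat -> int) -> C) m :
  (forall k, (k < m)%N -> balanced (G k)) -> balanced (fun n => \prod_(k < m) G k n).
Proof.
elim: m => [|m IH] HG; first by rewrite /balanced !big_ord0.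
have IHm := IH (fun k kl => HG k (ltnW kl)); rewrite /balanced in IHm.
have Hm := HG m (ltnSn m); rewrite /balanced in Hm.
by rewrite /balanced !big_ord_recr /= mulrACA IHm Hm mulrACA.
Qed.

Definition vertex_local (j1 j2 j3 : nat) : Prop :=
  let untouched j := u' j = u j /\ w' j = w j in
  let agreeing j := u j = w j /\ u' j = w' j in
  (untouched j1 /\ untouched j2 /\ untouched j3) \/
  (agreeing j1 /\ agreeing j2 /\ agreeing j3).

Lemma balanced_local (h : int -> int -> int -> C) j1 j2 j3 :
  vertex_local j1 j2 j3 -> balanced (fun n => h (n j1) (n j2) (n j3)).
Proof.
rewrite /balanced.
case=> [[[-> ->] [[-> ->] [-> ->]]] | [[-> ->] [[-> ->] [-> ->]]]] //.
by rewrite mulrC.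
Qed.
End Phase.

Section Configurations.
Variable L : hexlat.

Lemma cxorC (x y : conf L) : cxor L x y = cxor L y x.
Proof. by apply/ffunP => e; rewrite !ffunE addbC. Qed.
Lemma cxorA (x y z : conf L) : cxor L (cxor L x y) z = cxor L x (cxor L y z).
Proof. by apply/ffunP => e; rewrite !ffunE addbA. Qed.
Lemma cxorAC (x y z : conf L) : cxor L (cxor L x y) z = cxor L (cxor L x z) y.
Proof. by rewrite !cxorA (cxorC y). Qed.
Lemma cxorK (x y : conf L) : cxor L (cxor L x y) y = x.
Proof. by apply/ffunP => e; rewrite !ffunE -addbA addbb addbF. Qed.

Lemma restr_cxor A (u v : conf L) :
  restr L A (cxor L (restr L A u) v) = restr L A (cxor L u v).
Proof. by apply/ffunP => e; rewrite !ffunE; case: (e \in A). Qed.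
Lemma restr_id A (u : conf L) : restr L A (restr L A u) = restr L A u.
Proof. by apply/ffunP => e; rewrite !ffunE andbA andbb. Qed.

Lemma alpha_plaqsE s e : alpha_plaqs L s e = odd (count (fun q => alpha_plaq L q e) s).
Proof.
elim: s => [|q s IH]; first by rewrite /alpha_plaqs /= /czero ffunE.
rewrite [alpha_plaqs L _]/alpha_plaqs /= -/(alpha_plaqs L s) /cxor ffunE IH /= oddD.
by case: (alpha_plaq L q e).
Qed.

Lemma alpha_plaqs_perm s t : perm_eq s t -> alpha_plaqs L s = alpha_plaqs L t.
Proof.
move/permP => H; apply/ffunP => e; rewrite !alpha_plaqsE.
by rewrite (H (fun q => alpha_plaq L q e)).
Qed.

Lemma alpha_plaqs_rcons s q :
  alpha_plaqs L (rcons s q) = cxor L (alpha_plaqs L s) (alpha_plaq L q).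
Proof.
apply/ffunP => e; rewrite ffunE !alpha_plaqsE -cats1 count_cat /= addn0 oddD.
by case: (alpha_plaq L q e).
Qed.

End Configurations.

Lemma bph_Bform L C p i : bph L C p i = Bform C (fun j => nm L i (lab L p j)).
Proof. by []. Qed.

(* B_p^2 = 1 on the phases: alpha^p flips the boundary labels of p and,
   on a large torus, leaves its outgoing labels untouched. *)
Lemma bph_flip L C (Hlat : large_torus L) p z :
  bph L C p z * bph L C p (cxor L z (alpha_plaq L p)) = 1.
Proof.
rewrite !bph_Bform; apply: Bform_flip.
- move=> j jl; rewrite /nm /cxor ffunE.
  have -> : alpha_plaq L p (lab L p j) = true.
    rewrite /alpha_plaq ffunE; apply/existsP.
    exists (Ordinal (ltn_pmod (delta L j) (isT : (0 < 6)%N))).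
    by rewrite lab_boundary //; apply/eqP; apply: edge_of_eqmod; rewrite modn_mod.
  by case: (z _).
- move=> j jl; rewrite /nm /cxor ffunE.
  have -> : alpha_plaq L p (lab L p j) = false.
    rewrite /alpha_plaq ffunE; apply/negbTE/existsP => [[k /eqP]].
    rewrite /lab (_ : (j <= 6)%N = false); last by lia.
    by apply/eqP; apply: outer_not_boundary.
  by rewrite addbF.
- by rewrite lab0.
Qed.

Definition bratio L (C : numClosedFieldType) (P : seq (edge L)) (p : hex L) (x : conf L) : C :=
  bph L C p (cxor L x (alpha_path L P)) / bph L C p x.

Lemma bratio_flip L C (Hlat : large_torus L) P p x :
  bratio L C P p (cxor L x (alpha_plaq L p)) * bratio L C P p x = 1.
Proof.
rewrite /bratio cxorAC mulf_div [X in X / _]mulrC [X in _ / X]mulrC.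
by rewrite !bph_flip // divr1.
Qed.

Lemma theta_rcons L C s i ps q :
  theta L C s i (rcons ps q) = theta L C s i ps * bratio L C s q (cxor L i (alpha_plaqs L ps)).
Proof.
rewrite /theta /bratio size_rcons big_ord_recr /= cxorAC; congr (_ * _).
  apply: eq_bigr => k _ /=.
  have kl : (k < size ps)%N := ltn_ord k.
  by rewrite nth_rcons kl -cats1 take_cat kl.
by rewrite nth_rcons ltnn eqxx -cats1 take_cat ltnn subnn take0 cats0.
Qed.

Section Locality.
Variables (L : hexlat) (C : numClosedFieldType) (P : seq (edge L)).

Lemma alpha_path_mem e : alpha_path L P e -> e \in P.
Proof. by rewrite ffunE; apply: contraLR => /count_memPn ->. Qed.

Lemma Conn_vertex e0 e v : incident L v e0 -> incident L v e -> e0 \in P -> e \in Conn L P.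
Proof.
move=> H0 H1 HP; rewrite inE; apply/existsP; exists e0.
by rewrite HP /=; apply/orP; right; apply/existsP; exists v; rewrite H0 H1.
Qed.

Variables (x y : conf L) (p : hex L).
Hypothesis Hxy : restr L (Conn L P) x = restr L (Conn L P) y.

Let u j := nm L x (lab L p j).
Let u' j := nm L (cxor L x (alpha_path L P)) (lab L p j).
Let w j := nm L y (lab L p j).
Let w' j := nm L (cxor L y (alpha_path L P)) (lab L p j).

Lemma agree_Conn e : e \in Conn L P -> x e = y e.
Proof. by move=> He; have := congr1 (fun f : conf L => f e) Hxy; rewrite !ffunE He. Qed.

Lemma meet_at_vertex_dichotomy j1 j2 j3 :
  meet_at_vertex L (lab L p j1) (lab L p j2) (lab L p j3) -> vertex_local u u' w w' j1 j2 j3.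
Proof.
move=> [v /and3P [I1 I2 I3]].
have off_path e : alpha_path L P e = false ->
    nm L (cxor L x (alpha_path L P)) e = nm L x e /\
    nm L (cxor L y (alpha_path L P)) e = nm L y e.
  by rewrite /nm /cxor !ffunE => ->; rewrite !addbF.
have in_Conn e : e \in Conn L P ->
    nm L x e = nm L y e /\ nm L (cxor L x (alpha_path L P)) e = nm L (cxor L y (alpha_path L P)) e.
  by move=> He; rewrite /nm /cxor !ffunE (agree_Conn _ He).
case E: [|| alpha_path L P (lab L p j1), alpha_path L P (lab L p j2)
          | alpha_path L P (lab L p j3)].
  right.
  have [e0 He0 Iv] : exists2 e0, e0 \in P & incident L v e0.
    by case/or3P: E => /alpha_path_mem He;
      [exists (lab L p j1) | exists (lab L p j2) | exists (lab L p j3)].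
  by split; [|split]; apply: in_Conn; apply: (Conn_vertex _ _ _ Iv _ He0).
left; move/negbT: E; rewrite !negb_or => /and3P [/negbTE E1 /negbTE E2 /negbTE E3].
by split; [|split]; apply: off_path.
Qed.

Lemma bratio_local : bratio L C P p x = bratio L C P p y.
Proof.
have Hbal : balanced C u u' w w' (Bform C).
  have := balanced_prod C u u' w w'
    (fun k n => vfactor C k (n (vtriple k).1.1) (n (vtriple k).1.2) (n (vtriple k).2)) 12.
  rewrite /balanced -!Bform_vertex_factors; apply=> k kl.
  by apply: balanced_local; apply: meet_at_vertex_dichotomy; apply: vtriple_meet.
rewrite /bratio !bph_Bform; apply/eqP.
by rewrite eqr_div ?Bform_neq0 // Hbal.
Qed.
End Locality.
Arguments bratio_local {L C P x y} p Hxy.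

Section Algorithm1.
Variables (L : hexlat) (C : numClosedFieldType) (P : seq (edge L)).
Variables (F : conf L -> C) (R : {set conf L}) (ext : conf L -> conf L).
Hypothesis HRcls : forall i, restr L (Conn L P) i = i ->
  #|[set r in R | r \in cls L P i]| = 1%N.
Hypothesis Hext : forall r, r \in R -> restr L (Conn L P) (ext r) = r.
Hypothesis HFalg : forall r, r \in R -> forall ps : seq (hex L),
  uniq ps -> {subset ps <= BP L P} ->
  F (restr L (Conn L P) (cxor L r (alpha_plaqs L ps))) = theta L C P (ext r) ps * F r.

Lemma class_representative j : exists2 r, r \in R &
  exists2 S : {set hex L}, S \subset BP L P &
    restr L (Conn L P) j = restr L (Conn L P) (cxor L r (alpha_plaqs L (enum S))).
Proof.
have /eqP/cards1P [r Hr] := HRcls _ (restr_id L (Conn L P) j).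
have : r \in [set r in R | r \in cls L P (restr L (Conn L P) j)] by rewrite Hr set11.
rewrite inE => /andP [rR /imsetP [S SB rE]].
exists r => //; exists S; first by rewrite powersetE in SB.
by rewrite rE restr_cxor cxorK restr_id.
Qed.

Lemma F_step r ps p x : r \in R -> uniq ps -> {subset ps <= BP L P} ->
  p \in BP L P -> p \notin ps ->
  restr L (Conn L P) x = restr L (Conn L P) (cxor L r (alpha_plaqs L ps)) ->
  F (restr L (Conn L P) (cxor L x (alpha_plaq L p)))
  = bratio L C P p x * F (restr L (Conn L P) x).
Proof.
move=> rR ups sps pB pnot Hx.
have ups' : uniq (rcons ps p) by rewrite rcons_uniq pnot ups.
have sps' : {subset rcons ps p <= BP L P}.
  by move=> q; rewrite mem_rcons inE => /orP [/eqP -> | /sps].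
have Hxp : restr L (Conn L P) (cxor L x (alpha_plaq L p))
         = restr L (Conn L P) (cxor L r (alpha_plaqs L (rcons ps p))).
  by rewrite alpha_plaqs_rcons -cxorA -restr_cxor Hx restr_cxor.
have Hrx : restr L (Conn L P) (cxor L (ext r) (alpha_plaqs L ps)) = restr L (Conn L P) x.
  by rewrite -restr_cxor Hext // Hx.
rewrite Hxp Hx (HFalg _ rR _ ups' sps') theta_rcons (HFalg _ rR _ ups sps).
by rewrite (bratio_local p Hrx) mulrAC mulrC.
Qed.
End Algorithm1.
Arguments class_representative {L P R} HRcls j.
Arguments F_step {L C P F R ext} Hext HFalg r ps p x.

Theorem lemma4 (L : hexlat) (C : numClosedFieldType)
  (Hlat : forall m n : int, (m, n) != (0, 0) ->
     leq 3 (hexnorm (m * (La L).+1%:Z + n * (Lb L)%:Z, n * (Lc L).+1%:Z)))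
  (P : seq (edge L)) (HP : is_walk L P)
  (F : conf L -> C) (R : {set conf L}) (ext : conf L -> conf L)
  (HRconn : forall r, r \in R -> restr L (Conn L P) r = r)
  (HRcls : forall i, restr L (Conn L P) i = i ->
     #|[set r in R | r \in cls L P i]| = 1%N)
  (Hext : forall r, r \in R -> restr L (Conn L P) (ext r) = r)
  (HFunit : forall r, r \in R -> `|F r| = 1)
  (HFalg : forall r, r \in R -> forall ps : seq (hex L),
     uniq ps -> {subset ps <= BP L P} ->
     F (restr L (Conn L P) (cxor L r (alpha_plaqs L ps))) = theta L C P (ext r) ps * F r) :
  forall (j : conf L) (p : hex L), p \in BP L P ->
    F (restr L (Conn L P) (cxor L j (alpha_plaq L p)))
    = bph L C p (cxor L j (alpha_path L P)) / bph L C p j * F (restr L (Conn L P) j).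
Proof.
move=> j p pB; rewrite -/(bratio L C P p j).
have [r rR [S SB Hj]] := class_representative HRcls j.
have step := F_step Hext HFalg.
have sS : {subset enum S <= BP L P} by move=> q; rewrite mem_enum => /(subsetP SB).
have [pS | pS] := boolP (p \in S); last first.
  by apply: (step r (enum S)) => //; rewrite ?enum_uniq ?mem_enum.
(* p in S: step from j + alpha^p (a configuration of S \ {p}) back to j. *)
set ps := rem p (enum S).
have ups : uniq ps by rewrite rem_uniq // enum_uniq.
have pnot : p \notin ps by rewrite mem_rem_uniqF ?enum_uniq.
have Eps : alpha_plaqs L (enum S) = cxor L (alpha_plaqs L ps) (alpha_plaq L p).
  rewrite -alpha_plaqs_rcons; apply: alpha_plaqs_perm.
  by rewrite perm_sym perm_rcons perm_sym perm_to_rem ?mem_enum.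
have Hx : restr L (Conn L P) (cxor L j (alpha_plaq L p))
        = restr L (Conn L P) (cxor L r (alpha_plaqs L ps)).
  by rewrite -restr_cxor Hj restr_cxor Eps -cxorA cxorK.
have := step r ps p _ rR ups (fun q qp => sS q (mem_rem qp)) pB pnot Hx.
rewrite cxorK => ->.
by rewrite mulrA (mulrC (bratio _ _ _ _ _)) bratio_flip // mul1r.
Qed.
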